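(* Let $\ell\ge1$ and $\kappa\ge1$ be integers. For each integer $1\le \nu\le \kappa$ and $u>1$, \[ \widetilde{K}_{\ell}^{(\nu)}(u,\kappa)=(\kappa)_{\nu}\,\widetilde{K}_{\ell}(u,\kappa-\nu)+\sum_{j=0}^{\nu-1}\sum_{m=0}^{\ell}\sum_{r=0}^{\ell-m}\frac{(-1)^{r}\Gamma(\kappa+1)}{m!\,(\ell-m-r)!}E_{\kappa-j,m}C_{r,0}\left(\log^{\ell-m-r}u\right)^{(\nu-j)}, \] where all derivatives are with respect to $u$.
   Context: For integers $\ell\ge1$, $\kappa\ge0$ and $u>1$, define \[ \widetilde{K}_{\ell}(u,\kappa):=\sum_{m=0}^{\ell}\sum_{n=m}^{\kappa}\sum_{r=0}^{\ell-m}\frac{(-1)^{r}\Gamma(\kappa+1)}{m!\,(\ell-m-r)!}E_{n,m}C_{r,\kappa-n}u^{\kappa-n}\log^{\ell-m-r}u, \] where the sum over $n$ is empty if $m>\kappa$; the constants $C_{r,\kappa}$ ($r,\kappa\ge0$) are defined by $\sum_{r\ge0}C_{r,\kappa}z^r=e^{\gamma z}/\Gamma(\kappa+1-z)$ with $\gamma$ Euler's constant; the constants $E_{n,m}$ ($n,m\ge0$) are defined by $\sum_{n\ge0}E_{n,m}z^n=\left(\int_0^z\frac{1-e^{-t}}{t}\,dt\right)^m$. $\widetilde{K}_{\ell}^{(\nu)}$ denotes the $\nu$-th derivative in $u$, $\left(\log^{k}u\right)^{(i)}$ denotes the $i$-th derivative in $u$ of $(\log u)^k$, and $(x)_{n}:=x(x-1)\cdots(x-n+1)$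 is the falling factorial. *)

From Stdlib Require Import Reals List Factorial.
From Coquelicot Require Import Coquelicot.
Open Scope R_scope.

(* sumR a b f = f a + f (a+1) + ... + f b ; empty (= 0) if a > b. *)
Definition sumR (a b : nat) (f : nat -> R) : R :=
  fold_right Rplus 0 (map f (seq a (S b - a))).

Definition EulerGamma : R :=
  real (Lim_seq (fun n => sumR 1 n (fun i => / INR i) - ln (INR n))).

Definition Gamma (x : R) : R :=
  RInt_gen (fun t => Rpower t (x - 1) * exp (- t))
           (at_right 0) (Rbar_locally p_infty).

Fixpoint falling (x : R) (n : nat) : R :=
  match n with
  | O => 1
  | S n' => falling x n' * (x - INR n')
  end.

Definition Ein (z : R) : R :=
  RInt (fun t => if Req_EM_T t 0 then 1 else (1 - exp (- t)) / t) 0 z.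

Definition Ecoef (n m : nat) : R :=
  Derive_n (fun z => Ein z ^ m) n 0 / INR (fact n).

Definition Ccoef (r kappa : nat) : R :=
  Derive_n (fun z => exp (EulerGamma * z) / Gamma (INR kappa + 1 - z)) r 0
  / INR (fact r).

Definition Ktilde (l : nat) (u : R) (kappa : nat) : R :=
  sumR 0 l (fun m =>
  sumR m kappa (fun n =>
  sumR 0 (l - m) (fun r =>
    (-1) ^ r * Gamma (INR kappa + 1) / (INR (fact m) * INR (fact (l - m - r)))
    * Ecoef n m * Ccoef r (kappa - n) * u ^ (kappa - n) * ln u ^ (l - m - r)))).

(* Differentiating a summand u^(kappa-n) log^b u of K~ gives a power term and a
   log-derivative term.  For n < kappa, the identities Gamma(kappa+1) = kappa Gamma(kappa) and
   C_{r,kappa-1} = kappa C_{r,kappa} - C_{r-1,kappa} (Taylor coefficients of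
   1/Gamma(kappa-z) = (kappa-z)/Gamma(kappa+1-z)) recombine both terms into the summands of
   kappa K~(u, kappa-1); the summands with n = kappa have no power term and leave a residue
   of log-derivative terms.  So K~' = kappa K~(., kappa-1) + residue, and iterating nu times
   produces the falling factorial and, at step j, the j-th term of the sum; E_{n,m} = 0 for
   n < m (as Ein(z) = O(z)) lets every m-sum run up to l.  The coefficients C need 1/Gamma to
   be smooth, which follows by differentiating Euler's integral under the integral sign, with
   t^(c-1)/(1+t^c)^2 as a single integrable majorant at both ends. *)

From Stdlib Require Import Reals List Factorial Lia Lra FunctionalExtensionality.
From Coquelicot Require Import Coquelicot.
Open Scope R_scope.

Lemma fold_right_Rplus_acc (s : list R) x : fold_right Rplus x s = fold_right Rplus 0 s + x.
Proof. induction s as [|y s IH]; simpl; [ring | rewrite IH; ring]. Qed.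

Lemma sumR_nil a b f : (b < a)%nat -> sumR a b f = 0.
Proof. intros H. unfold sumR. replace (S b - a)%nat with 0%nat by lia. reflexivity. Qed.

Lemma sumR_single a f : sumR a a f = f a.
Proof. unfold sumR. replace (S a - a)%nat with 1%nat by lia. simpl. ring. Qed.

Lemma sumR_first a b f : (a <= b)%nat -> sumR a b f = f a + sumR (S a) b f.
Proof. intros H. unfold sumR. replace (S b - a)%nat with (S (S b - S a)) by lia. reflexivity. Qed.

Lemma sumR_last a b f : (a <= S b)%nat -> sumR a (S b) f = sumR a b f + f (S b).
Proof.
  intros H. unfold sumR. replace (S (S b) - a)%nat with (S (S b - a)) by lia.
  rewrite seq_S, map_app, fold_right_app. cbn [fold_right map]. rewrite fold_right_Rplus_acc.
  replace (a + (S b - a))%nat with (S b) by lia. ring.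
Qed.

Lemma sumR_shift a b f : sumR (S a) (S b) f = sumR a b (fun i => f (S i)).
Proof. unfold sumR. simpl minus. rewrite <- seq_shift, map_map. reflexivity. Qed.

Lemma sumR_ext a b f g : (forall i, (a <= i <= b)%nat -> f i = g i) -> sumR a b f = sumR a b g.
Proof.
  intros H. unfold sumR. f_equal. apply map_ext_in. intros i Hi. apply in_seq in Hi. apply H. lia.
Qed.

Lemma sumR_plus a b f g : sumR a b (fun i => f i + g i) = sumR a b f + sumR a b g.
Proof. unfold sumR. induction (seq a (S b - a)) as [|x s IH]; simpl; [ring | rewrite IH; ring]. Qed.

Lemma sumR_scal a b c f : sumR a b (fun i => c * f i) = c * sumR a b f.
Proof. unfold sumR. induction (seq a (S b - a)) as [|x s IH]; simpl; [ring | rewrite IH; ring]. Qed.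

Lemma sumR_opp a b f : sumR a b (fun i => - f i) = - sumR a b f.
Proof. unfold sumR. induction (seq a (S b - a)) as [|x s IH]; simpl; [ring | rewrite IH; ring]. Qed.

Lemma sumR_zero a b f : (forall i, (a <= i <= b)%nat -> f i = 0) -> sumR a b f = 0.
Proof.
  intros H. rewrite (sumR_ext a b f (fun i => 0 * 1)), sumR_scal; [ring|].
  intros i Hi. rewrite H by exact Hi. ring.
Qed.

Lemma INR_fact_S n : INR (fact (S n)) = INR (S n) * INR (fact n).
Proof. rewrite <- mult_INR. reflexivity. Qed.

Lemma is_derive_sumR (F dF : nat -> R -> R) a b v :
  (forall i, (a <= i <= b)%nat -> is_derive (F i) v (dF i v)) ->
  is_derive (fun w => sumR a b (fun i => F i w)) v (sumR a b (fun i => dF i v)).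
Proof.
  intros H. unfold sumR.
  assert (Hs : forall i, In i (seq a (S b - a)) -> is_derive (F i) v (dF i v)).
  { intros i Hi. apply in_seq in Hi. apply H. lia. }
  induction (seq a (S b - a)) as [|i s IH]; simpl.
  - apply (is_derive_const 0).
  - apply (is_derive_plus (F i)); [apply Hs; left; reflexivity|].
    apply IH. intros j Hj. apply Hs. right. exact Hj.
Qed.

Lemma Derive_n_S_Derive f n x : Derive_n f (S n) x = Derive_n (Derive f) n x.
Proof. rewrite <- Nat.add_1_r, <- (Derive_n_comp f n 1). reflexivity. Qed.

(** * Smooth functions on open sets *)

Definition ex_derive_upto (U : R -> Prop) (n : nat) (f : R -> R) :=
  forall x, U x -> forall j, (j <= n)%nat -> ex_derive_n f j x.

Definition smooth_on (U : R -> Prop) (f : R -> R) := forall n, ex_derive_upto U n f.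

Section DerivableUpTo.

Variable U : R -> Prop.
Hypothesis HU : open U.

Lemma ex_derive_upto_0 f : ex_derive_upto U 0 f.
Proof. intros x _ j Hj. replace j with 0%nat by lia. exact I. Qed.

Lemma ex_derive_upto_locally n f x : ex_derive_upto U n f -> U x ->
  locally x (fun y => forall k, (k <= n)%nat -> ex_derive_n f k y).
Proof.
  intros Hf Hx. destruct (HU x Hx) as [e He]. exists e. intros y Hy k Hk. apply Hf; auto.
Qed.

Lemma ex_derive_upto_le n m f : (m <= n)%nat -> ex_derive_upto U n f -> ex_derive_upto U m f.
Proof. intros Hmn Hf x Hx j Hj. apply Hf; auto; lia. Qed.

Lemma ex_derive_upto_ext n f g : (forall x, U x -> f x = g x) ->
  ex_derive_upto U n f -> ex_derive_upto U n g.
Proof.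
  intros Hfg Hf x Hx j Hj. apply ex_derive_n_ext_loc with f; [|apply Hf; auto].
  destruct (HU x Hx) as [e He]. exists e. intros y Hy. apply Hfg, He, Hy.
Qed.

Lemma ex_derive_upto_S n f :
  ex_derive_upto U (S n) f <-> (forall x, U x -> ex_derive f x) /\ ex_derive_upto U n (Derive f).
Proof.
  assert (Hshift : forall j x, ex_derive_n f (S (S j)) x <-> ex_derive_n (Derive f) (S j) x).
  { intros j x.
    split; apply ex_derive_ext; intro t; rewrite Derive_n_S_Derive; reflexivity. }
  split.
  - intros H. split.
    + intros x Hx. exact (H x Hx 1%nat ltac:(lia)).
    + intros x Hx [|j] Hj; [exact I|]. apply (proj1 (Hshift j x)), H; auto; lia.
  - intros [H1 H2] x Hx [|[|j]] Hj; [exact I | exact (H1 x Hx) |].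
    apply (proj2 (Hshift j x)), H2; auto; lia.
Qed.

Lemma ex_derive_upto_const n a : ex_derive_upto U n (fun _ => a).
Proof. intros x Hx [|j] Hj; [exact I | apply ex_derive_n_const]. Qed.

Lemma ex_derive_upto_scal n a f : ex_derive_upto U n f -> ex_derive_upto U n (fun x => a * f x).
Proof. intros Hf x Hx j Hj. apply ex_derive_n_scal_l. auto. Qed.

Lemma ex_derive_upto_plus n f g : ex_derive_upto U n f -> ex_derive_upto U n g ->
  ex_derive_upto U n (fun x => f x + g x).
Proof.
  intros Hf Hg x Hx j Hj.
  apply ex_derive_n_plus; apply ex_derive_upto_locally with (n := j); auto;
    apply ex_derive_upto_le with n; auto.
Qed.

Lemma ex_derive_upto_mult n : forall f g, ex_derive_upto U n f -> ex_derive_upto U n g ->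
  ex_derive_upto U n (fun x => f x * g x).
Proof.
  induction n as [|n IH]; intros f g Hf Hg; [apply ex_derive_upto_0|].
  assert (Hf0 := ex_derive_upto_le (S n) n f ltac:(lia) Hf).
  assert (Hg0 := ex_derive_upto_le (S n) n g ltac:(lia) Hg).
  apply ex_derive_upto_S in Hf as [Hf1 Hf2]. apply ex_derive_upto_S in Hg as [Hg1 Hg2].
  apply ex_derive_upto_S. split.
  - intros x Hx. apply ex_derive_mult; auto.
  - apply ex_derive_upto_ext with (fun x => Derive f x * g x + f x * Derive g x).
    + intros x Hx. rewrite Derive_mult; auto.
    + apply ex_derive_upto_plus; auto.
Qed.

Lemma ex_derive_upto_inv n : forall f, ex_derive_upto U n f -> (forall x, U x -> f x <> 0) ->
  ex_derive_upto U n (fun x => / f x).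
Proof.
  induction n as [|n IH]; intros f Hf Hnz; [apply ex_derive_upto_0|].
  assert (Hf0 := ex_derive_upto_le (S n) n f ltac:(lia) Hf).
  apply ex_derive_upto_S in Hf as [Hf1 Hf2].
  apply ex_derive_upto_S. split.
  - intros x Hx. apply ex_derive_inv; auto.
  - apply ex_derive_upto_ext with (fun x => (-1 * Derive f x) * (/ f x * / f x)).
    + intros x Hx. rewrite Derive_inv by auto. field. auto.
    + apply ex_derive_upto_mult; [apply ex_derive_upto_scal | apply ex_derive_upto_mult]; auto.
Qed.

Lemma smooth_on_const a : smooth_on U (fun _ => a).
Proof. intros n. apply ex_derive_upto_const. Qed.

Lemma smooth_on_scal a f : smooth_on U f -> smooth_on U (fun x => a * f x).
Proof. intros Hf n. apply ex_derive_upto_scal, Hf. Qed.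

Lemma smooth_on_plus f g : smooth_on U f -> smooth_on U g -> smooth_on U (fun x => f x + g x).
Proof. intros Hf Hg n. apply ex_derive_upto_plus; auto. Qed.

Lemma smooth_on_mult f g : smooth_on U f -> smooth_on U g -> smooth_on U (fun x => f x * g x).
Proof. intros Hf Hg n. apply ex_derive_upto_mult; auto. Qed.

Lemma smooth_on_inv f : smooth_on U f -> (forall x, U x -> f x <> 0) -> smooth_on U (fun x => / f x).
Proof. intros Hf Hnz n. apply ex_derive_upto_inv; auto. Qed.

Lemma smooth_on_pow f m : smooth_on U f -> smooth_on U (fun x => f x ^ m).
Proof.
  intros Hf. induction m as [|m IH]; [exact (smooth_on_const 1) | apply smooth_on_mult; auto].
Qed.

Lemma smooth_on_id : smooth_on U (fun x => x).
Proof.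
  intros n x _ j _. apply (ex_derive_n_ext (fun z => z ^ 1)); [intros; simpl; ring | apply ex_derive_n_pow].
Qed.

Lemma smooth_on_Derive f : smooth_on U f -> smooth_on U (Derive f).
Proof. intros Hf n. exact (proj2 (proj1 (ex_derive_upto_S n f) (Hf (S n)))). Qed.

Lemma smooth_on_ex_derive f x : smooth_on U f -> U x -> ex_derive f x.
Proof. intros Hf Hx. exact (Hf 1%nat x Hx 1%nat (le_n _)). Qed.

Lemma smooth_on_fold (F : nat -> R -> R) (s : list nat) : (forall i, smooth_on U (F i)) ->
  smooth_on U (fun x => fold_right Rplus 0 (map (fun i => F i x) s)).
Proof.
  intros HF. induction s as [|i s IH]; simpl; [apply smooth_on_const | apply smooth_on_plus; auto].
Qed.

Lemma smooth_on_sumR (F : nat -> R -> R) a b : (forall i, smooth_on U (F i)) ->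
  smooth_on U (fun x => sumR a b (fun i => F i x)).
Proof. apply smooth_on_fold. Qed.

Lemma Derive_n_sumR (F : nat -> R -> R) a b n x : (forall i, smooth_on U (F i)) -> U x ->
  Derive_n (fun y => sumR a b (fun i => F i y)) n x = sumR a b (fun i => Derive_n (F i) n x).
Proof.
  intros HF Hx. unfold sumR. induction (seq a (S b - a)) as [|i s IH]; simpl.
  - destruct n; [reflexivity | apply Derive_n_const].
  - rewrite Derive_n_plus, IH; [reflexivity | |]; apply ex_derive_upto_locally; auto.
    + apply HF.
    + apply (smooth_on_fold F s HF).
Qed.

Lemma smooth_on_exp_scal c : smooth_on U (fun z => exp (c * z)).
Proof.
  intros n. induction n as [|n IH]; [apply ex_derive_upto_0|].
  apply (proj2 (ex_derive_upto_S n _)). split.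
  - intros x _. auto_derive. exact I.
  - apply (ex_derive_upto_ext n (fun z => c * exp (c * z))).
    + intros x _. apply sym_eq, is_derive_unique. auto_derive; [exact I | ring].
    + apply ex_derive_upto_scal, IH.
Qed.

Lemma Derive_n_linear_mult a G : smooth_on U G -> forall s z, U z ->
  Derive_n (fun y => (a - y) * G y) (S s) z
  = (a - z) * Derive_n G (S s) z - INR (S s) * Derive_n G s z.
Proof.
  intros HG s. induction s as [|s IH]; intros z Hz.
  - change (Derive (fun y => (a - y) * G y) z = (a - z) * Derive G z - INR 1 * G z).
    apply is_derive_unique.
    replace ((a - z) * Derive G z - INR 1 * G z) with (-1 * G z + (a - z) * Derive G z) by (simpl; ring).
    apply (is_derive_mult (fun y => a - y) G); [auto_derive; auto; ring | | intros; apply Rmult_comm].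
    apply Derive_correct, (smooth_on_ex_derive G z HG Hz).
  - change (Derive (Derive_n (fun y => (a - y) * G y) (S s)) z
            = (a - z) * Derive_n G (S (S s)) z - INR (S (S s)) * Derive_n G (S s) z).
    rewrite (Derive_ext_loc _ (fun y => (a - y) * Derive_n G (S s) y - INR (S s) * Derive_n G s y)).
    2:{ destruct (HU z Hz) as [e He]. exists e. intros y Hy. apply IH, He, Hy. }
    apply is_derive_unique.
    replace ((a - z) * Derive_n G (S (S s)) z - INR (S (S s)) * Derive_n G (S s) z)
      with (-1 * Derive_n G (S s) z + (a - z) * Derive_n G (S (S s)) z
            - INR (S s) * Derive_n G (S s) z) by (rewrite (S_INR (S s)); ring).
    apply (is_derive_minus (fun y => (a - y) * Derive_n G (S s) y) (fun y => INR (S s) * Derive_n G s y)).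
    + apply (is_derive_mult (fun y => a - y) (Derive_n G (S s)));
        [auto_derive; auto; ring | | intros; apply Rmult_comm].
      apply Derive_correct. exact (HG (S (S s)) z Hz (S (S s)) (le_n _)).
    + apply (is_derive_scal (Derive_n G s)), Derive_correct. exact (HG (S s) z Hz (S s) (le_n _)).
Qed.

End DerivableUpTo.

(** * Euler's integral and its derivatives *)

Lemma Rpower_pos t c : 0 < Rpower t c.
Proof. apply exp_pos. Qed.

Lemma Rpower_minus1 t c : 0 < t -> Rpower t (c - 1) = Rpower t c / t.
Proof.
  intros Ht. unfold Rpower. replace ((c - 1) * ln t) with (c * ln t + - ln t) by ring.
  rewrite exp_plus, exp_Ropp, exp_ln by exact Ht. reflexivity.
Qed.

Lemma exp_le_mono x y : x <= y -> exp x <= exp y.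
Proof. intros [H|H]; [left; apply exp_increasing, H | rewrite H; right; reflexivity]. Qed.

Lemma ln_le_sub1 y : 0 < y -> ln y <= y - 1.
Proof. intros Hy. pose proof (exp_ineq1_le (ln y)) as H. rewrite exp_ln in H by exact Hy. lra. Qed.

Lemma ln_nonpos t : 0 < t <= 1 -> ln t <= 0.
Proof. intros [Ht0 Ht1]. rewrite <- ln_1. apply ln_le; assumption. Qed.

Lemma ln_nonneg t : 1 <= t -> 0 <= ln t.
Proof. intros Ht. rewrite <- ln_1. apply ln_le; lra. Qed.

Lemma Rpower_le_1 t p : 0 < t <= 1 -> 0 <= p -> Rpower t p <= 1.
Proof.
  intros Ht Hp. unfold Rpower. rewrite <- exp_0. apply exp_le_mono.
  pose proof (ln_nonpos t Ht). nra.
Qed.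

Lemma Rpower_ge_1 t p : 1 <= t -> 0 <= p -> 1 <= Rpower t p.
Proof.
  intros Ht Hp. unfold Rpower. rewrite <- exp_0. apply exp_le_mono.
  pose proof (ln_nonneg t Ht). nra.
Qed.

Lemma Rpower_pow_l t y m : Rpower t y ^ m = Rpower t (y * INR m).
Proof.
  induction m as [|m IH].
  - simpl. unfold Rpower. rewrite Rmult_0_r, Rmult_0_l, exp_0. reflexivity.
  - rewrite S_INR. simpl. rewrite IH, <- Rpower_plus. f_equal. ring.
Qed.

Lemma Rpower_exp_le g t : 0 < g -> 0 < t -> Rpower t g * exp (- t) <= Rpower g g.
Proof.
  intros Hg Ht. unfold Rpower. rewrite <- exp_plus. apply exp_le_mono.
  pose proof (ln_le_sub1 (t / g) ltac:(apply Rdiv_lt_0_compat; auto)) as H.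
  unfold Rdiv in H. rewrite ln_mult, ln_Rinv in H by (auto; apply Rinv_0_lt_compat; auto).
  apply Rmult_le_compat_l with (r := g) in H; [|lra].
  replace (g * (t * / g - 1)) with (t - g) in H by (field; lra). nra.
Qed.

Lemma abs_ln_le_near_0 t e : 0 < t <= 1 -> 0 < e -> Rabs (ln t) <= Rpower t (- e) / e.
Proof.
  intros Ht He. rewrite Rabs_left1 by (apply ln_nonpos, Ht).
  pose proof (ln_le_sub1 (Rpower t (- e)) (Rpower_pos _ _)) as H.
  unfold Rpower in H at 1. rewrite ln_exp in H.
  apply Rmult_le_reg_r with e; auto. unfold Rdiv. rewrite Rmult_assoc, Rinv_l by lra. nra.
Qed.

Lemma abs_ln_le_id t : 1 <= t -> Rabs (ln t) <= t.
Proof.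
  intros Ht. rewrite Rabs_right by (apply Rle_ge, ln_nonneg, Ht).
  pose proof (ln_le_sub1 t ltac:(lra)). lra.
Qed.

Definition at_0_infty := filter_prod (at_right 0) (Rbar_locally p_infty).

Lemma at_0_infty_pos (P : R * R -> Prop) :
  (forall a b, 0 < a -> 0 < b -> P (a, b)) -> at_0_infty P.
Proof.
  intros HP. apply (Filter_prod _ _ _ (fun a => 0 < a) (fun b => 0 < b)).
  - exists (mkposreal 1 Rlt_0_1). intros y _ Hy. exact Hy.
  - exists 0. intros; auto.
  - exact HP.
Qed.

(* An integrable majorant on (0, +oo) behaving like t^(c-1) near 0 and like t^(-c-1)
   near +oo, with the explicit primitive [power_majorant_primitive c]. *)
Definition power_majorant (c t : R) := Rpower t (c - 1) / (1 + Rpower t c) ^ 2.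
Definition power_majorant_primitive (c t : R) := Rpower t c / (c * (1 + Rpower t c)).

Section Majorant.

Variable c : R.
Hypothesis Hc : 0 < c.

Lemma power_majorant_pos t : 0 < power_majorant c t.
Proof.
  pose proof (Rpower_pos t (c - 1)). pose proof (Rpower_pos t c).
  apply Rdiv_lt_0_compat; auto. apply pow_lt. lra.
Qed.

Lemma power_majorant_continuous t : 0 < t -> continuous (power_majorant c) t.
Proof.
  intros Ht. apply (ex_derive_continuous (power_majorant c)). unfold power_majorant, Rpower. auto_derive.
  repeat split; auto. pose proof (exp_pos (c * ln t)). apply Rgt_not_eq. apply Rmult_lt_0_compat; lra.
Qed.

Lemma is_derive_power_majorant_primitive t : 0 < t ->
  is_derive (power_majorant_primitive c) t (power_majorant c t).
Proof.
  intros Ht. unfold power_majorant_primitive, power_majorant. rewrite Rpower_minus1 by exact Ht.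
  unfold Rpower. pose proof (exp_pos (c * ln t)). auto_derive.
  - repeat split; auto. apply Rgt_not_eq. apply Rmult_lt_0_compat; lra.
  - field. split; lra.
Qed.

Lemma power_majorant_primitive_bounds t : 0 < t -> 0 < power_majorant_primitive c t < 1 / c.
Proof.
  intros Ht. unfold power_majorant_primitive. pose proof (Rpower_pos t c). split.
  - apply Rdiv_lt_0_compat; auto. apply Rmult_lt_0_compat; lra.
  - apply Rmult_lt_reg_r with (c * (1 + Rpower t c)); [apply Rmult_lt_0_compat; lra|].
    field_simplify; lra.
Qed.

Lemma power_majorant_primitive_near_0 eta : 0 < eta ->
  exists d, 0 < d /\ forall t, 0 < t < d -> power_majorant_primitive c t < eta.
Proof.
  intros He. exists (exp (ln (eta * c) / c)). split; [apply exp_pos|].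
  intros t [Ht1 Ht2]. unfold power_majorant_primitive.
  assert (H1 : Rpower t c < eta * c).
  { unfold Rpower. rewrite <- (exp_ln (eta * c)) by (apply Rmult_lt_0_compat; auto).
    apply exp_increasing. apply ln_increasing in Ht2; auto. rewrite ln_exp in Ht2.
    apply Rmult_lt_reg_r with (/ c); [apply Rinv_0_lt_compat; auto|].
    replace (c * ln t * / c) with (ln t) by (field; lra). exact Ht2. }
  pose proof (Rpower_pos t c).
  apply Rle_lt_trans with (Rpower t c / c).
  - unfold Rdiv. apply Rmult_le_compat_l; [lra|]. apply Rinv_le_contravar; nra.
  - apply Rmult_lt_reg_r with c; auto. field_simplify; lra.
Qed.

Lemma power_majorant_primitive_near_infty eta : 0 < eta ->
  exists M, 0 < M /\ forall t, M < t -> 1 / c - power_majorant_primitive c t < eta.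
Proof.
  intros He. exists (exp (ln (/ (eta * c)) / c)). split; [apply exp_pos|].
  intros t Ht. assert (Ht0 : 0 < t) by (pose proof (exp_pos (ln (/ (eta * c)) / c)); lra).
  assert (H1 : / (eta * c) < Rpower t c).
  { unfold Rpower. rewrite <- (exp_ln (/ (eta * c))) by (apply Rinv_0_lt_compat, Rmult_lt_0_compat; auto).
    apply exp_increasing. apply ln_increasing in Ht; [|apply exp_pos]. rewrite ln_exp in Ht.
    apply Rmult_lt_reg_r with (/ c); [apply Rinv_0_lt_compat; auto|].
    replace (c * ln t * / c) with (ln t) by (field; lra). exact Ht. }
  pose proof (Rpower_pos t c). unfold power_majorant_primitive.
  replace (1 / c - Rpower t c / (c * (1 + Rpower t c))) with (/ (c * (1 + Rpower t c))) by (field; lra).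
  apply Rlt_trans with (/ (c * Rpower t c)).
  - apply Rinv_lt_contravar; [apply Rmult_lt_0_compat; nra | apply Rmult_lt_compat_l; lra].
  - rewrite <- (Rinv_inv eta).
    apply Rinv_lt_contravar; [apply Rmult_lt_0_compat; [apply Rinv_0_lt_compat|]; nra|].
    apply Rmult_lt_reg_r with (/ c); [apply Rinv_0_lt_compat; auto|].
    replace (c * Rpower t c * / c) with (Rpower t c) by (field; lra).
    replace (/ eta * / c) with (/ (eta * c)) by (field; lra). exact H1.
Qed.

Lemma is_RInt_power_majorant K a b : 0 < a -> 0 < b ->
  is_RInt (fun t => K * power_majorant c t) a b
    (K * (power_majorant_primitive c b - power_majorant_primitive c a)).
Proof.
  intros Ha Hb.
  assert (Hpos : forall x, Rmin a b <= x <= Rmax a b -> 0 < x).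
  { intros x Hx. apply Rlt_le_trans with (Rmin a b); [apply Rmin_glb_lt; auto | apply Hx]. }
  replace (K * (power_majorant_primitive c b - power_majorant_primitive c a))
    with (minus (K * power_majorant_primitive c b) (K * power_majorant_primitive c a))
    by (unfold minus, plus, opp; simpl; ring).
  apply (is_RInt_derive (fun t => K * power_majorant_primitive c t)).
  - intros x Hx. apply (is_derive_scal (power_majorant_primitive c)).
    apply is_derive_power_majorant_primitive, Hpos, Hx.
  - intros x Hx. apply (continuous_scal_r K (power_majorant c)), power_majorant_continuous, Hpos, Hx.
Qed.

Section Majorized.

Variables (f : R -> R) (K : R).
Hypothesis Hf : forall t, 0 < t -> continuous f t.
Hypothesis Hfmaj : forall t, 0 < t -> Rabs (f t) <= K * power_majorant c t.

Lemma majorized_K_nonneg : 0 <= K.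
Proof.
  specialize (Hfmaj 1 ltac:(lra)). pose proof (Rabs_pos (f 1)). pose proof (power_majorant_pos 1).
  destruct (Rle_or_lt 0 K); auto. nra.
Qed.

Lemma ex_RInt_majorized a b : 0 < a -> 0 < b -> ex_RInt f a b.
Proof.
  intros Ha Hb. apply (ex_RInt_continuous (V := R_CompleteNormedModule)). intros z Hz. apply Hf.
  apply Rlt_le_trans with (Rmin a b); [apply Rmin_glb_lt; auto | apply Hz].
Qed.

Lemma abs_RInt_le_majorant_sorted a b : 0 < a -> a <= b ->
  Rabs (RInt f a b) <= K * (power_majorant_primitive c b - power_majorant_primitive c a).
Proof.
  intros Ha Hab.
  eapply Rle_trans; [apply abs_RInt_le; auto; apply ex_RInt_majorized; lra|].
  rewrite <- (is_RInt_unique _ _ _ _ (is_RInt_power_majorant K a b Ha ltac:(lra))).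
  apply RInt_le; auto.
  - apply (ex_RInt_continuous (V := R_CompleteNormedModule)). intros z Hz.
    apply continuous_Rabs_comp, Hf. apply Rlt_le_trans with (Rmin a b); [apply Rmin_glb_lt; lra | apply Hz].
  - eexists. apply is_RInt_power_majorant; lra.
  - intros x Hx. apply Hfmaj. lra.
Qed.

Lemma abs_RInt_le_majorant a b : 0 < a -> 0 < b ->
  Rabs (RInt f a b) <= K * Rabs (power_majorant_primitive c b - power_majorant_primitive c a).
Proof.
  intros Ha Hb. pose proof majorized_K_nonneg.
  destruct (Rle_or_lt a b) as [Hab|Hab].
  - eapply Rle_trans; [apply abs_RInt_le_majorant_sorted; auto|].
    apply Rmult_le_compat_l; auto. apply Rle_abs.
  - rewrite <- (opp_RInt_swap f b a) by (apply ex_RInt_majorized; auto).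
    change (Rabs (- RInt f b a) <= K * Rabs (power_majorant_primitive c b - power_majorant_primitive c a)).
    rewrite Rabs_Ropp, Rabs_minus_sym.
    eapply Rle_trans; [apply abs_RInt_le_majorant_sorted; auto; lra|].
    apply Rmult_le_compat_l; auto. apply Rle_abs.
Qed.

Let RInt_ab (ab : R * R) := RInt f (fst ab) (snd ab).

Lemma cauchy_RInt_majorized : cauchy (filtermap RInt_ab at_0_infty).
Proof.
  pose proof majorized_K_nonneg as HK.
  intros eps. set (eta := eps / (2 * (K + 1))).
  assert (Heta : 0 < eta) by (unfold eta; apply Rdiv_lt_0_compat; [apply cond_pos | lra]).
  assert (Hsmall : K * eta + K * eta < eps).
  { unfold eta. pose proof (cond_pos eps). apply Rmult_lt_reg_r with (K + 1); [lra|].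
    field_simplify; nra. }
  destruct (power_majorant_primitive_near_0 eta Heta) as [d [Hd0 Hd]].
  destruct (power_majorant_primitive_near_infty eta Heta) as [M [HM0 HM]].
  exists (RInt_ab (d / 2, M + 1)).
  apply (Filter_prod _ _ _ (fun a => 0 < a < d) (fun b => M < b)).
  - exists (mkposreal d Hd0). intros y Hy Hy0. split; auto.
    apply Rabs_def2 in Hy. unfold minus, plus, opp in Hy; simpl in Hy. lra.
  - exists M. auto.
  - intros a b [Ha1 Ha2] Hb. change (Rabs (RInt f a b - RInt f (d / 2) (M + 1)) < eps).
    rewrite <- (RInt_Chasles f a (d / 2) b), <- (RInt_Chasles f (d / 2) (M + 1) b)
      by (apply ex_RInt_majorized; lra).
    replace (plus (RInt f a (d / 2)) (plus (RInt f (d / 2) (M + 1)) (RInt f (M + 1) b))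
             - RInt f (d / 2) (M + 1))
      with (RInt f a (d / 2) + RInt f (M + 1) b) by (unfold plus; simpl; ring).
    assert (A1 : Rabs (power_majorant_primitive c (d / 2) - power_majorant_primitive c a) <= eta).
    { pose proof (Hd a ltac:(lra)). pose proof (Hd (d / 2) ltac:(lra)).
      pose proof (power_majorant_primitive_bounds a Ha1).
      pose proof (power_majorant_primitive_bounds (d / 2) ltac:(lra)). apply Rabs_le. lra. }
    assert (A2 : Rabs (power_majorant_primitive c b - power_majorant_primitive c (M + 1)) <= eta).
    { pose proof (HM b Hb). pose proof (HM (M + 1) ltac:(lra)).
      pose proof (power_majorant_primitive_bounds b ltac:(lra)).
      pose proof (power_majorant_primitive_bounds (M + 1) ltac:(lra)). apply Rabs_le. lra. }
    pose proof (abs_RInt_le_majorant a (d / 2) Ha1 ltac:(lra)).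
    pose proof (abs_RInt_le_majorant (M + 1) b ltac:(lra) ltac:(lra)).
    pose proof (Rmult_le_compat_l K _ _ HK A1). pose proof (Rmult_le_compat_l K _ _ HK A2).
    eapply Rle_lt_trans; [apply Rabs_triang | lra].
Qed.

Lemma is_RInt_gen_majorized :
  exists l, is_RInt_gen f (at_right 0) (Rbar_locally p_infty) l /\ Rabs l <= K / c.
Proof.
  pose proof majorized_K_nonneg as HK.
  assert (HF : ProperFilter (filtermap RInt_ab at_0_infty))
    by (apply filtermap_proper_filter; apply filter_prod_proper).
  set (l := lim (filtermap RInt_ab at_0_infty)).
  assert (Hlim : filterlim RInt_ab at_0_infty (locally l)).
  { intros P [e He]. apply (filter_imp (F := at_0_infty) (fun ab => ball l e (RInt_ab ab))).
    - intros ab H. apply He, H.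
    - apply (complete_cauchy _ HF cauchy_RInt_majorized e). }
  exists l. split.
  - apply (filterlimi_lim_ext_loc RInt_ab); [|exact Hlim].
    apply at_0_infty_pos. intros a b Ha Hb.
    apply (RInt_correct (V := R_CompleteNormedModule)), ex_RInt_majorized; auto.
  - assert (Hle := filterlim_le (F := at_0_infty) (fun ab => Rabs (RInt_ab ab)) (fun _ => K / c)
                      (Rabs l) (K / c)).
    simpl in Hle. apply Hle.
    + apply at_0_infty_pos. intros a b Ha Hb. unfold RInt_ab; simpl.
      eapply Rle_trans; [apply abs_RInt_le_majorant; auto|].
      pose proof (power_majorant_primitive_bounds a Ha). pose proof (power_majorant_primitive_bounds b Hb).
      replace (K / c) with (K * (1 / c)) by (field; lra).
      apply Rmult_le_compat_l; auto. apply Rabs_le. lra.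
    + apply filterlim_comp with (locally l); [exact Hlim | apply continuous_Rabs].
    + apply filterlim_const.
Qed.

End Majorized.

End Majorant.

Section GammaWeight.

Variables (a c : R) (m : nat).
Hypotheses (Ha : 0 < a) (Hc : 0 < c).

Lemma gamma_weight_le_near_0 t : 0 < t <= 1 ->
  Rpower t a * Rabs (ln t) ^ m * exp (- t) * (1 + Rpower t c) ^ 2 <= 4 * (/ (a / (INR m + 1))) ^ m.
Proof.
  intros Ht. pose proof (pos_INR m).
  set (e := a / (INR m + 1)). assert (He : 0 < e) by (unfold e; apply Rdiv_lt_0_compat; lra).
  set (L := Rabs (ln t) ^ m). assert (HL : 0 <= L) by (apply pow_le, Rabs_pos).
  pose proof (Rpower_pos t a). pose proof (Rpower_pos t c). pose proof (exp_pos (- t)).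
  assert (HLe : L <= (/ e) ^ m * Rpower t (- e * INR m)).
  { unfold L. rewrite <- Rpower_pow_l, <- Rpow_mult_distr. apply pow_incr. split; [apply Rabs_pos|].
    rewrite Rmult_comm. apply abs_ln_le_near_0; auto. }
  assert (Hae : Rpower t a * Rpower t (- e * INR m) <= 1).
  { rewrite <- Rpower_plus. apply Rpower_le_1; [lra|]. unfold e.
    apply Rmult_le_reg_r with (INR m + 1); [lra|]. field_simplify; lra. }
  assert (Hc1 : Rpower t c <= 1) by (apply Rpower_le_1; lra).
  assert (He1 : exp (- t) <= 1) by (rewrite <- exp_0; apply exp_le_mono; lra).
  assert (HaL : Rpower t a * L <= (/ e) ^ m).
  { apply Rle_trans with (Rpower t a * ((/ e) ^ m * Rpower t (- e * INR m)));
      [apply Rmult_le_compat_l; lra|].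
    assert (0 <= (/ e) ^ m) by (apply pow_le; left; apply Rinv_0_lt_compat, He).
    rewrite Rmult_comm, Rmult_assoc. rewrite <- (Rmult_1_r ((/ e) ^ m)) at 2.
    apply Rmult_le_compat_l; [assumption|]. rewrite Rmult_comm. exact Hae. }
  assert (HaL0 : 0 <= Rpower t a * L) by (apply Rmult_le_pos; lra).
  assert (0 <= Rpower t a * L * exp (- t)) by (apply Rmult_le_pos; lra).
  assert (Rpower t a * L * exp (- t) <= (/ e) ^ m).
  { apply Rle_trans with (Rpower t a * L * 1); [apply Rmult_le_compat_l|]; lra. }
  assert ((1 + Rpower t c) ^ 2 <= 4) by nra.
  nra.
Qed.

Lemma gamma_weight_le_near_infty t : 1 < t ->
  Rpower t a * Rabs (ln t) ^ m * exp (- t) * (1 + Rpower t c) ^ 2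
  <= 4 * Rpower (a + INR m + 2 * c) (a + INR m + 2 * c).
Proof.
  intros Ht. pose proof (pos_INR m).
  set (L := Rabs (ln t) ^ m). assert (HL : 0 <= L) by (apply pow_le, Rabs_pos).
  pose proof (Rpower_pos t a). pose proof (Rpower_pos t (INR m)). pose proof (Rpower_pos t (2 * c)).
  pose proof (exp_pos (- t)).
  assert (HLm : L <= Rpower t (INR m)).
  { unfold L. rewrite Rpower_pow by lra. apply pow_incr. split; [apply Rabs_pos | apply abs_ln_le_id; lra]. }
  assert (Hc1 : 1 <= Rpower t c) by (apply Rpower_ge_1; lra).
  assert (Hsq : (1 + Rpower t c) ^ 2 <= 4 * Rpower t (2 * c)).
  { replace (2 * c) with (c + c) by ring. rewrite Rpower_plus. nra. }
  assert (Hg : Rpower t a * Rpower t (INR m) * Rpower t (2 * c) * exp (- t)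
               <= Rpower (a + INR m + 2 * c) (a + INR m + 2 * c)).
  { rewrite <- !Rpower_plus. apply Rpower_exp_le; lra. }
  assert (Rpower t a * L <= Rpower t a * Rpower t (INR m)) by (apply Rmult_le_compat_l; lra).
  assert (0 <= Rpower t a * L) by nra.
  apply Rle_trans with (Rpower t a * Rpower t (INR m) * exp (- t) * (4 * Rpower t (2 * c))); [|nra].
  apply Rmult_le_compat; [nra | apply pow_le; lra | apply Rmult_le_compat_r; lra | exact Hsq].
Qed.

End GammaWeight.

Lemma gamma_weight_majorized b m c : 0 < c < b + 1 ->
  exists K, forall t, 0 < t -> Rpower t b * Rabs (ln t) ^ m * exp (- t) <= K * power_majorant c t.
Proof.
  intros [Hc Hcb]. set (a := b + 1 - c). assert (Ha : 0 < a) by (unfold a; lra).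
  set (K := 4 * (/ (a / (INR m + 1))) ^ m + 4 * Rpower (a + INR m + 2 * c) (a + INR m + 2 * c)).
  exists K. intros t Ht.
  assert (HK : Rpower t a * Rabs (ln t) ^ m * exp (- t) * (1 + Rpower t c) ^ 2 <= K).
  { pose proof (Rpower_pos (a + INR m + 2 * c) (a + INR m + 2 * c)).
    assert (0 <= (/ (a / (INR m + 1))) ^ m).
    { apply pow_le. left. apply Rinv_0_lt_compat, Rdiv_lt_0_compat; [lra | pose proof (pos_INR m); lra]. }
    destruct (Rle_or_lt t 1) as [Ht1|Ht1].
    - pose proof (gamma_weight_le_near_0 a c m Ha Hc t (conj Ht Ht1)). unfold K. lra.
    - pose proof (gamma_weight_le_near_infty a c m Ha Hc t Ht1). unfold K. lra. }
  assert (Hq : 0 < (1 + Rpower t c) ^ 2) by (apply pow_lt; pose proof (Rpower_pos t c); lra).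
  replace (Rpower t b) with (Rpower t (c - 1) * Rpower t a)
    by (rewrite <- Rpower_plus; f_equal; unfold a; ring).
  unfold power_majorant. apply Rmult_le_reg_r with ((1 + Rpower t c) ^ 2); [exact Hq|].
  replace (K * (Rpower t (c - 1) / (1 + Rpower t c) ^ 2) * (1 + Rpower t c) ^ 2)
    with (Rpower t (c - 1) * K) by (field; pose proof (Rpower_pos t c); lra).
  replace (Rpower t (c - 1) * Rpower t a * Rabs (ln t) ^ m * exp (- t) * (1 + Rpower t c) ^ 2)
    with (Rpower t (c - 1) * (Rpower t a * Rabs (ln t) ^ m * exp (- t) * (1 + Rpower t c) ^ 2)) by ring.
  apply Rmult_le_compat_l; [left; apply Rpower_pos | exact HK].
Qed.

Lemma Rabs_le_between_0 a x : Rmin 0 a <= x <= Rmax 0 a -> Rabs x <= Rabs a.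
Proof.
  intros [H1 H2]. unfold Rmin, Rmax in *. destruct (Rle_dec 0 a).
  - rewrite !Rabs_right; lra.
  - rewrite !Rabs_left1; lra.
Qed.

Lemma abs_exp_sub_1_le s : Rabs (exp s - 1) <= Rabs s * exp (Rabs s).
Proof.
  destruct (MVT_gen exp 0 s exp) as [z [Hz E]].
  - intros; apply is_derive_exp.
  - intros x _. apply continuity_pt_filterlim, (ex_derive_continuous exp). eexists; apply is_derive_exp.
  - rewrite exp_0 in E. rewrite E, Rminus_0_r, Rabs_mult, Rmult_comm.
    rewrite (Rabs_right (exp z)) by (left; apply exp_pos).
    apply Rmult_le_compat_l; [apply Rabs_pos|]. apply exp_le_mono.
    pose proof (Rabs_le_between_0 s z Hz). pose proof (Rle_abs z). lra.
Qed.

Lemma abs_exp_taylor_1_le y : Rabs (exp y - 1 - y) <= y ^ 2 * exp (Rabs y).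
Proof.
  destruct (MVT_gen (fun s => exp s - 1 - s) 0 y (fun s => exp s - 1)) as [z [Hz E]].
  - intros x _. auto_derive; auto. ring.
  - intros x _. apply continuity_pt_filterlim, (ex_derive_continuous (fun s => exp s - 1 - s)).
    auto_derive; auto.
  - simpl in E. rewrite exp_0 in E.
    replace (exp y - 1 - y) with (exp y - 1 - y - (1 - 1 - 0)) by ring.
    rewrite E, Rminus_0_r, Rabs_mult.
    pose proof (Rabs_le_between_0 y z Hz). pose proof (abs_exp_sub_1_le z).
    pose proof (Rabs_pos z). pose proof (Rabs_pos y). pose proof (exp_pos (Rabs z)).
    assert (exp (Rabs z) <= exp (Rabs y)) by (apply exp_le_mono; auto).
    replace (y ^ 2) with (Rabs y * Rabs y) by (rewrite <- Rabs_mult, Rabs_right; [ring | nra]).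
    apply Rle_trans with (Rabs z * exp (Rabs z) * Rabs y); [apply Rmult_le_compat_r; auto|].
    apply Rle_trans with (Rabs y * exp (Rabs y) * Rabs y); [apply Rmult_le_compat_r; auto|right; ring].
    apply Rmult_le_compat; auto. nra.
Qed.

Lemma is_derive_of_quadratic_remainder (F : R -> R) x L d M : 0 < d ->
  (forall h, h <> 0 -> Rabs h < d -> Rabs (F (x + h) - F x - h * L) <= M * h ^ 2) ->
  is_derive F x L.
Proof.
  intros Hd HF. apply is_derive_Reals. intros eps Heps.
  assert (HM : 0 <= M).
  { specialize (HF (d / 2) ltac:(apply Rgt_not_eq; lra) ltac:(rewrite Rabs_right; lra)).
    pose proof (Rabs_pos (F (x + d / 2) - F x - d / 2 * L)).
    assert (0 < (d / 2) ^ 2) by (apply pow_lt; lra).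
    destruct (Rle_or_lt 0 M); [assumption | nra]. }
  assert (Hdelta : 0 < Rmin d (eps / (M + 1))) by (apply Rmin_glb_lt; [lra | apply Rdiv_lt_0_compat; lra]).
  exists (mkposreal _ Hdelta). intros h Hh0 Hh. simpl in Hh.
  assert (Hhd : Rabs h < d) by (eapply Rlt_le_trans; [apply Hh | apply Rmin_l]).
  assert (Hhe : Rabs h < eps / (M + 1)) by (eapply Rlt_le_trans; [apply Hh | apply Rmin_r]).
  assert (Hah : 0 < Rabs h) by (apply Rabs_pos_lt, Hh0).
  replace ((F (x + h) - F x) / h - L) with ((F (x + h) - F x - h * L) / h) by (field; exact Hh0).
  unfold Rdiv. rewrite Rabs_mult, Rabs_inv.
  apply Rmult_lt_reg_r with (Rabs h); [exact Hah|].
  rewrite Rmult_assoc, Rinv_l, Rmult_1_r by lra.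
  eapply Rle_lt_trans; [apply HF; auto|].
  replace (M * h ^ 2) with (Rabs h * M * Rabs h) by (rewrite <- pow2_abs; ring).
  apply Rmult_lt_compat_r; [exact Hah|].
  apply Rle_lt_trans with (eps / (M + 1) * M); [apply Rmult_le_compat_r; lra|].
  apply Rmult_lt_reg_r with (M + 1); [lra|]. field_simplify; nra.
Qed.

Definition gamma_integrand (n : nat) (x t : R) := Rpower t (x - 1) * ln t ^ n * exp (- t).

Definition Gamma_deriv (n : nat) (x : R) :=
  RInt_gen (gamma_integrand n x) (at_right 0) (Rbar_locally p_infty).

Lemma gamma_integrand_continuous n x t : 0 < t -> continuous (gamma_integrand n x) t.
Proof.
  intros Ht. apply (ex_derive_continuous (gamma_integrand n x)).
  unfold gamma_integrand, Rpower. auto_derive. auto.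
Qed.

Lemma abs_gamma_integrand_mult n x t y :
  Rabs (gamma_integrand n x t * y) = Rpower t (x - 1) * Rabs (ln t) ^ n * exp (- t) * Rabs y.
Proof.
  unfold gamma_integrand. rewrite !Rabs_mult, <- RPow_abs.
  rewrite (Rabs_right (Rpower t (x - 1))) by (left; apply Rpower_pos).
  rewrite (Rabs_right (exp (- t))) by (left; apply exp_pos). reflexivity.
Qed.

Lemma is_RInt_gen_Gamma_deriv n x : 0 < x ->
  is_RInt_gen (gamma_integrand n x) (at_right 0) (Rbar_locally p_infty) (Gamma_deriv n x).
Proof.
  intros Hx. destruct (gamma_weight_majorized (x - 1) n (x / 2) ltac:(lra)) as [K HK].
  destruct (is_RInt_gen_majorized (x / 2) ltac:(lra) (gamma_integrand n x) K) as [l [Hl _]].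
  - intros; apply gamma_integrand_continuous; auto.
  - intros t Ht. rewrite <- (Rmult_1_r (gamma_integrand n x t)), abs_gamma_integrand_mult, Rabs_R1, Rmult_1_r.
    apply HK, Ht.
  - unfold Gamma_deriv. rewrite (is_RInt_gen_unique _ l Hl). exact Hl.
Qed.

(* [exp (h ln t) - 1 - h ln t] is [O(h^2 ln^2 t)], uniformly enough in [t] to be absorbed by
   the integrands of exponents [x - 1 +- d]. *)
Lemma gamma_integrand_taylor_le n x d h t : 0 < t -> Rabs h <= d ->
  Rabs (gamma_integrand n (x + h) t - gamma_integrand n x t - h * gamma_integrand (S n) x t)
  <= h ^ 2 * (Rpower t (x - 1 + d) * Rabs (ln t) ^ S (S n) * exp (- t)
              + Rpower t (x - 1 + - d) * Rabs (ln t) ^ S (S n) * exp (- t)).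
Proof.
  intros Ht Hh. pose proof (Rabs_pos h).
  replace (gamma_integrand n (x + h) t - gamma_integrand n x t - h * gamma_integrand (S n) x t)
    with (gamma_integrand n x t * (exp (h * ln t) - 1 - h * ln t)).
  2:{ unfold gamma_integrand. replace (x + h - 1) with ((x - 1) + h) by ring.
      rewrite Rpower_plus. change (Rpower t h) with (exp (h * ln t)). simpl pow. ring. }
  rewrite abs_gamma_integrand_mult.
  set (A := Rpower t (x - 1) * Rabs (ln t) ^ n * exp (- t)).
  assert (HA : 0 <= A).
  { unfold A. pose proof (Rpower_pos t (x - 1)). pose proof (exp_pos (- t)).
    pose proof (pow_le (Rabs (ln t)) n (Rabs_pos _)). apply Rmult_le_pos; [apply Rmult_le_pos|]; lra. }
  assert (Hexp : exp (Rabs (h * ln t)) <= exp (d * ln t) + exp (- d * ln t)).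
  { apply Rle_trans with (exp (d * Rabs (ln t))).
    - apply exp_le_mono. rewrite Rabs_mult. apply Rmult_le_compat_r; [apply Rabs_pos | exact Hh].
    - pose proof (exp_pos (d * ln t)). pose proof (exp_pos (- d * ln t)).
      destruct (Rle_or_lt 0 (ln t)).
      + rewrite Rabs_right by lra. lra.
      + rewrite Rabs_left by lra. replace (d * - ln t) with (- d * ln t) by ring. lra. }
  apply Rle_trans with (A * ((h * ln t) ^ 2 * (exp (d * ln t) + exp (- d * ln t)))).
  { apply Rmult_le_compat_l; [exact HA|].
    eapply Rle_trans; [apply abs_exp_taylor_1_le|].
    apply Rmult_le_compat_l; [apply pow2_ge_0 | exact Hexp]. }
  replace ((h * ln t) ^ 2) with (h ^ 2 * Rabs (ln t) ^ 2)
    by (rewrite pow2_abs; ring).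
  rewrite !Rpower_plus. right. unfold A.
  change (Rpower t d) with (exp (d * ln t)). change (Rpower t (- d)) with (exp (- d * ln t)).
  simpl. ring.
Qed.

Lemma is_derive_Gamma_deriv n x : 0 < x -> is_derive (Gamma_deriv n) x (Gamma_deriv (S n) x).
Proof.
  intros Hx. set (d := x / 2). set (c := x / 4).
  destruct (gamma_weight_majorized (x - 1 + d) (S (S n)) c ltac:(unfold c, d; lra)) as [K1 HK1].
  destruct (gamma_weight_majorized (x - 1 + - d) (S (S n)) c ltac:(unfold c, d; lra)) as [K2 HK2].
  apply (is_derive_of_quadratic_remainder _ x _ d ((K1 + K2) / c)); [unfold d; lra|].
  intros h Hh0 Hhd.
  assert (Hxh : 0 < x + h) by (destruct (Rabs_def2 _ _ Hhd); unfold d in *; lra).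
  set (rem := fun t => gamma_integrand n (x + h) t - gamma_integrand n x t - h * gamma_integrand (S n) x t).
  assert (Hrem : is_RInt_gen rem (at_right 0) (Rbar_locally p_infty)
                   (Gamma_deriv n (x + h) - Gamma_deriv n x - h * Gamma_deriv (S n) x)).
  { apply (is_RInt_gen_minus (V := R_NormedModule)).
    - apply (is_RInt_gen_minus (V := R_NormedModule)); apply is_RInt_gen_Gamma_deriv; auto.
    - apply (is_RInt_gen_scal (V := R_NormedModule) (gamma_integrand (S n) x) h).
      apply is_RInt_gen_Gamma_deriv, Hx. }
  destruct (is_RInt_gen_majorized c ltac:(unfold c; lra) rem (h ^ 2 * (K1 + K2))) as [l [Hl Hlb]].
  - intros t Ht. apply (ex_derive_continuous rem). unfold rem, gamma_integrand, Rpower.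
    auto_derive. repeat split; auto.
  - intros t Ht. eapply Rle_trans; [apply (gamma_integrand_taylor_le n x d h t Ht); lra|].
    specialize (HK1 t Ht). specialize (HK2 t Ht). pose proof (pow2_ge_0 h).
    replace (h ^ 2 * (K1 + K2) * power_majorant c t)
      with (h ^ 2 * (K1 * power_majorant c t + K2 * power_majorant c t)) by ring.
    apply Rmult_le_compat_l; lra.
  - rewrite <- (is_RInt_gen_unique _ _ Hl), (is_RInt_gen_unique _ _ Hrem) in Hlb.
    eapply Rle_trans; [exact Hlb | right; field; unfold c; lra].
Qed.

(** * Smoothness, positivity and the functional equation of Gamma *)

Lemma Gamma_eq_Gamma_deriv_0 : Gamma = Gamma_deriv 0.
Proof.
  apply functional_extensionality. intros x. unfold Gamma, Gamma_deriv, gamma_integrand. f_equal.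
  apply functional_extensionality. intros t. simpl. ring.
Qed.

Lemma Derive_n_Gamma k y : 0 < y -> Derive_n Gamma k y = Gamma_deriv k y.
Proof.
  rewrite Gamma_eq_Gamma_deriv_0. revert y. induction k as [|k IH]; intros y Hy; [reflexivity|].
  simpl. rewrite (Derive_ext_loc _ (Gamma_deriv k)).
  - apply is_derive_unique, is_derive_Gamma_deriv, Hy.
  - destruct (open_gt 0 y Hy) as [e He]. exists e. intros z Hz. apply IH, He, Hz.
Qed.

Lemma smooth_on_Gamma : smooth_on (Rlt 0) Gamma.
Proof.
  intros n y Hy [|j] Hj; [exact I|]. simpl.
  apply (ex_derive_ext_loc (Gamma_deriv j)).
  - destruct (open_gt 0 y Hy) as [e He]. exists e. intros z Hz. symmetry. apply Derive_n_Gamma, He, Hz.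
  - eexists. apply is_derive_Gamma_deriv, Hy.
Qed.

Lemma filterlim_RInt_at_0_infty (f : R -> R) l :
  is_RInt_gen f (at_right 0) (Rbar_locally p_infty) l ->
  filterlim (fun ab : R * R => RInt f (fst ab) (snd ab)) at_0_infty (locally l).
Proof.
  intros H P HP.
  apply (filter_imp (F := at_0_infty) (fun ab => exists y, is_RInt f (fst ab) (snd ab) y /\ P y)).
  - intros ab [y [Hy Py]]. unfold filtermap. rewrite (is_RInt_unique _ _ _ _ Hy). exact Py.
  - exact (H P HP).
Qed.

Lemma Gamma_pos x : 0 < x -> 0 < Gamma x.
Proof.
  intros Hx. rewrite Gamma_eq_Gamma_deriv_0. set (f := gamma_integrand 0 x).
  assert (Hf_pos : forall t, 0 < t -> 0 < f t).
  { intros t Ht. unfold f, gamma_integrand. simpl. rewrite Rmult_1_r.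
    apply Rmult_lt_0_compat; [apply Rpower_pos | apply exp_pos]. }
  assert (Hf_int : forall a b, 0 < a -> 0 < b -> ex_RInt f a b).
  { intros a b Ha Hb. apply (ex_RInt_continuous (V := R_CompleteNormedModule)). intros z Hz.
    apply gamma_integrand_continuous.
    apply Rlt_le_trans with (Rmin a b); [apply Rmin_glb_lt; auto | apply Hz]. }
  assert (H12 : 0 < RInt f 1 2).
  { apply RInt_gt_0; [lra | intros; apply Hf_pos; lra | intros; apply gamma_integrand_continuous; lra]. }
  assert (Hle := filterlim_le (F := at_0_infty) (fun _ => RInt f 1 2)
                   (fun ab : R * R => RInt f (fst ab) (snd ab)) (RInt f 1 2) (Gamma_deriv 0 x)).
  simpl in Hle. apply Rlt_le_trans with (RInt f 1 2); [exact H12|]. apply Hle.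
  - apply (Filter_prod _ _ _ (fun a => 0 < a < 1) (fun b => 2 < b)).
    + exists (mkposreal 1 Rlt_0_1). intros y Hy Hy0. split; [exact Hy0|].
      destruct (Rabs_def2 _ _ Hy). unfold minus, plus, opp in *; simpl in *. lra.
    + exists 2. auto.
    + intros a b [Ha1 Ha2] Hb. simpl.
      rewrite <- (RInt_Chasles f a 1 b), <- (RInt_Chasles f 1 2 b) by (apply Hf_int; lra).
      assert (0 <= RInt f a 1)
        by (apply RInt_ge_0; [lra | apply Hf_int; lra | intros; left; apply Hf_pos; lra]).
      assert (0 <= RInt f 2 b)
        by (apply RInt_ge_0; [lra | apply Hf_int; lra | intros; left; apply Hf_pos; lra]).
      unfold plus; simpl. lra.
  - apply filterlim_const.
  - apply filterlim_RInt_at_0_infty, is_RInt_gen_Gamma_deriv, Hx.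
Qed.

Lemma filterlim_Rpower_exp_at_0 x : 0 < x ->
  filterlim (fun t => Rpower t x * exp (- t)) (at_right 0) (locally 0).
Proof.
  intros Hx. apply filterlim_locally. intros eps.
  exists (mkposreal _ (exp_pos (ln eps / x))). intros t Ht Ht0. simpl in Ht.
  destruct (Rabs_def2 _ _ Ht) as [Ht1 _]. unfold minus, plus, opp in Ht1; simpl in Ht1.
  rewrite Ropp_0, Rplus_0_r in Ht1.
  change (Rabs (Rpower t x * exp (- t) - 0) < eps).
  rewrite Rminus_0_r, Rabs_right by (left; apply Rmult_lt_0_compat; [apply Rpower_pos | apply exp_pos]).
  apply Rle_lt_trans with (Rpower t x).
  { rewrite <- (Rmult_1_r (Rpower t x)) at 2. apply Rmult_le_compat_l; [left; apply Rpower_pos|].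
    rewrite <- exp_0. apply exp_le_mono. lra. }
  unfold Rpower. rewrite <- (exp_ln eps) by apply cond_pos. apply exp_increasing.
  apply ln_increasing in Ht1; [|exact Ht0]. rewrite ln_exp in Ht1.
  apply Rmult_lt_reg_r with (/ x); [apply Rinv_0_lt_compat, Hx|].
  replace (x * ln t * / x) with (ln t) by (field; lra). exact Ht1.
Qed.

Lemma filterlim_Rpower_exp_at_infty x : 0 < x ->
  filterlim (fun t => Rpower t x * exp (- t)) (Rbar_locally p_infty) (locally 0).
Proof.
  intros Hx. apply filterlim_locally. intros eps.
  set (B := Rpower (x + 1) (x + 1)). assert (HB : 0 < B) by apply Rpower_pos.
  pose proof (cond_pos eps).
  exists (B / eps + 1). intros t Ht.
  assert (Ht0 : 0 < t) by (assert (0 < B / eps) by (apply Rdiv_lt_0_compat; auto); lra).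
  change (Rabs (Rpower t x * exp (- t) - 0) < eps).
  rewrite Rminus_0_r, Rabs_right by (left; apply Rmult_lt_0_compat; [apply Rpower_pos | apply exp_pos]).
  replace x with (x + 1 - 1) at 1 by ring. rewrite Rpower_minus1 by exact Ht0.
  pose proof (Rpower_exp_le (x + 1) t ltac:(lra) Ht0) as HBt. fold B in HBt.
  apply Rle_lt_trans with (B / t).
  { unfold Rdiv. rewrite Rmult_assoc, (Rmult_comm (/ t)), <- Rmult_assoc.
    apply Rmult_le_compat_r; [left; apply Rinv_0_lt_compat, Ht0 | exact HBt]. }
  apply Rmult_lt_reg_r with (t / eps); [apply Rdiv_lt_0_compat; auto|].
  replace (B / t * (t / eps)) with (B / eps) by (field; lra).
  replace (eps * (t / eps)) with t by (field; lra). lra.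
Qed.

(* Integration by parts against the boundary term [t^x e^(-t)], which vanishes at both ends. *)
Lemma Gamma_succ x : 0 < x -> Gamma (x + 1) = x * Gamma x.
Proof.
  intros Hx. rewrite Gamma_eq_Gamma_deriv_0.
  set (F := fun t => Rpower t x * exp (- t)).
  set (dF := fun t => x * gamma_integrand 0 x t - gamma_integrand 0 (x + 1) t).
  assert (HdF : forall t, 0 < t -> is_derive F t (dF t)).
  { intros t Ht. unfold F, dF, gamma_integrand. replace (x + 1 - 1) with x by ring.
    rewrite Rpower_minus1 by exact Ht. unfold Rpower. auto_derive; [exact Ht | field; lra]. }
  assert (Hpos : forall a b z, 0 < a -> 0 < b -> Rmin a b <= z <= Rmax a b -> 0 < z).
  { intros a b z Ha Hb Hz. apply Rlt_le_trans with (Rmin a b); [apply Rmin_glb_lt; auto | apply Hz]. }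
  assert (HF : is_RInt_gen dF (at_right 0) (Rbar_locally p_infty) (0 - 0)).
  { apply (is_RInt_gen_ext (V := R_NormedModule) (Derive F)).
    - apply at_0_infty_pos. intros a b Ha Hb z Hz. simpl in *.
      apply is_derive_unique, HdF, (Hpos a b z Ha Hb). lra.
    - apply is_RInt_gen_Derive.
      + apply at_0_infty_pos. intros a b Ha Hb z Hz. eexists. apply HdF, (Hpos a b z Ha Hb Hz).
      + apply at_0_infty_pos. intros a b Ha Hb z Hz. apply (continuous_ext_loc _ dF).
        * destruct (open_gt 0 z (Hpos a b z Ha Hb Hz)) as [e He]. exists e. intros y Hy.
          symmetry. apply is_derive_unique, HdF, He, Hy.
        * apply (ex_derive_continuous dF). pose proof (Hpos a b z Ha Hb Hz).
          unfold dF, gamma_integrand, Rpower. auto_derive. repeat split; assumption.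
      + apply filterlim_Rpower_exp_at_0, Hx.
      + apply filterlim_Rpower_exp_at_infty, Hx. }
  assert (Hsum : is_RInt_gen (fun t => x * gamma_integrand 0 x t - dF t) (at_right 0) (Rbar_locally p_infty)
                   (x * Gamma_deriv 0 x - (0 - 0))).
  { apply (is_RInt_gen_minus (V := R_NormedModule)); [|exact HF].
    apply (is_RInt_gen_scal (V := R_NormedModule) (gamma_integrand 0 x) x), is_RInt_gen_Gamma_deriv, Hx. }
  replace (x * Gamma_deriv 0 x) with (x * Gamma_deriv 0 x - (0 - 0)) by ring.
  unfold Gamma_deriv at 1. rewrite <- (is_RInt_gen_unique _ _ Hsum). f_equal.
  apply functional_extensionality. intros t. unfold dF. ring.
Qed.

(** * The coefficients C and E *)

Lemma smooth_on_comp_sub a f : smooth_on (Rlt 0) f -> smooth_on (fun z => z < a) (fun z => f (a - z)).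
Proof.
  intros Hf n x Hx j Hj.
  apply (ex_derive_n_ext (fun y => (fun w => f (w + a)) (- y))).
  { intros t. cbv beta. replace (- t + a) with (a - t) by ring. reflexivity. }
  apply (ex_derive_n_comp_opp (fun w => f (w + a))).
  destruct (open_gt 0 (a - x) ltac:(lra)) as [e He]. exists e. intros y Hy k Hk.
  apply (ex_derive_n_comp_trans f). apply (Hf k); [|lia].
  apply He. change (Rabs (y + a - (a - x)) < e). change (Rabs (y - - x) < e) in Hy.
  replace (y + a - (a - x)) with (y - - x) by ring. exact Hy.
Qed.

Definition C_generating (k : nat) (z : R) := exp (EulerGamma * z) / Gamma (INR k + 1 - z).

Lemma smooth_on_C_generating k : smooth_on (fun z => z < INR k + 1) (C_generating k).
Proof.
  apply smooth_on_mult; [apply open_lt | apply smooth_on_exp_scal, open_lt |].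
  apply smooth_on_inv; [apply open_lt | apply smooth_on_comp_sub, smooth_on_Gamma |].
  intros z Hz. apply Rgt_not_eq, Gamma_pos. lra.
Qed.

Lemma C_generating_succ k y : y < INR k + 1 -> C_generating k y = (INR (S k) - y) * C_generating (S k) y.
Proof.
  intros Hy. unfold C_generating. rewrite S_INR.
  replace (INR k + 1 + 1 - y) with ((INR k + 1 - y) + 1) by ring.
  rewrite Gamma_succ by lra. pose proof (Gamma_pos (INR k + 1 - y) ltac:(lra)).
  field. split; lra.
Qed.

(* [1/Gamma(k+1-z) = (k+1-z)/Gamma(k+2-z)], read off on Taylor coefficients at [0]. *)
Lemma Ccoef_succ k r :
  Ccoef r k = INR (S k) * Ccoef r (S k) - match r with O => 0 | S r' => Ccoef r' (S k) end.
Proof.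
  change (Ccoef r k) with (Derive_n (C_generating k) r 0 / INR (fact r)).
  rewrite (Derive_n_ext_loc _ (fun y => (INR (S k) - y) * C_generating (S k) y)).
  2:{ pose proof (pos_INR k). destruct (open_lt (INR k + 1) 0 ltac:(lra)) as [e He].
      exists e. intros y Hy. apply C_generating_succ, He, Hy. }
  destruct r as [|r].
  - unfold Ccoef, C_generating. cbn [Derive_n fact]. unfold Rdiv. ring.
  - rewrite (Derive_n_linear_mult (fun z => z < INR (S k) + 1));
      [| apply open_lt | apply smooth_on_C_generating | pose proof (pos_INR (S k)); lra].
    unfold Ccoef. fold (C_generating (S k)).
    rewrite (INR_fact_S r).
    field. split; [apply INR_fact_neq_0 | apply not_0_INR; lia].
Qed.

Definition Ein_integrand_coef (k : nat) : R := (-1) ^ k / INR (fact (S k)).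

Lemma CV_radius_Ein_integrand_coef : CV_radius Ein_integrand_coef = p_infty.
Proof.
  apply CV_radius_infinite_DAlembert.
  - intros n. apply Rmult_integral_contrapositive. split.
    + apply pow_nonzero. lra.
    + apply Rinv_neq_0_compat, INR_fact_neq_0.
  - apply is_lim_seq_ext with (fun n => / INR (S (S n))).
    + intros n. unfold Ein_integrand_coef. pose proof (INR_fact_neq_0 (S n)).
      assert (INR (S (S n)) <> 0) by (apply not_0_INR; lia).
      rewrite (INR_fact_S (S n)).
      replace ((-1) ^ S n / (INR (S (S n)) * INR (fact (S n))) / ((-1) ^ n / INR (fact (S n))))
        with (- / INR (S (S n))) by (simpl pow; field; repeat split; auto; apply pow_nonzero; lra).
      rewrite Rabs_Ropp, Rabs_right; [reflexivity|].
      left. apply Rinv_0_lt_compat, lt_0_INR. lia.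
    + replace (Finite 0) with (Rbar_inv p_infty) by reflexivity.
      apply (is_lim_seq_inv (fun n => INR (S (S n))) p_infty); [|discriminate].
      apply (is_lim_seq_incr_1 (fun n => INR (S n))), (is_lim_seq_incr_1 INR), is_lim_seq_INR.
Qed.

Lemma Ein_integrand_PSeries t :
  (if Req_EM_T t 0 then 1 else (1 - exp (- t)) / t) = PSeries Ein_integrand_coef t.
Proof.
  destruct (Req_EM_T t 0) as [Ht|Ht].
  - subst. rewrite PSeries_0. unfold Ein_integrand_coef. simpl. field.
  - symmetry. apply is_pseries_unique.
    assert (Hm : mult (- / t) (- t) = one) by (change (- / t * - t = 1); field; exact Ht).
    pose proof (is_pseries_decr_1 _ _ _ _ Hm (is_exp_Reals (- t))) as H.
    replace ((1 - exp (- t)) / t) with (scal (- / t) (plus (exp (- t)) (opp (/ INR (fact 0)))))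
      by (change (- / t * (exp (- t) + - / INR (fact 0)) = (1 - exp (- t)) / t); simpl; field; exact Ht).
    revert H. apply is_series_ext. intros n.
    unfold PS_decr_1, Ein_integrand_coef. rewrite !pow_n_pow.
    change ((- t) ^ n * / INR (fact (S n)) = t ^ n * ((-1) ^ n / INR (fact (S n)))).
    replace (- t) with (-1 * t) by ring. rewrite Rpow_mult_distr. unfold Rdiv. ring.
Qed.

Definition Ein_quotient := PSeries (PS_decr_1 (PS_Int Ein_integrand_coef)).

Lemma Ein_eq_mult_quotient z : Ein z = z * Ein_quotient z.
Proof.
  unfold Ein. rewrite (RInt_ext _ (PSeries Ein_integrand_coef)) by (intros; apply Ein_integrand_PSeries).
  rewrite (RInt_PSeries Ein_integrand_coef z) by (rewrite CV_radius_Ein_integrand_coef; exact I).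
  apply PSeries_decr_1_aux. reflexivity.
Qed.

Lemma smooth_Ein_quotient : smooth_on (fun _ => True) Ein_quotient.
Proof.
  intros n x _ j _. apply ex_derive_n_PSeries.
  unfold Ein_quotient. rewrite CV_radius_decr_1, CV_radius_Int, CV_radius_Ein_integrand_coef. exact I.
Qed.

Lemma Derive_n_pow_mult_at_0 n : forall m Q, smooth_on (fun _ => True) Q -> (n < m)%nat ->
  Derive_n (fun z => z ^ m * Q z) n 0 = 0.
Proof.
  induction n as [|n IH]; intros [|m] Q HQ Hnm; try lia.
  - simpl. ring.
  - rewrite Derive_n_S_Derive.
    rewrite (Derive_n_ext _ (fun z => z ^ m * (INR (S m) * Q z + z * Derive Q z))).
    + apply IH; [|lia].
      apply smooth_on_plus; [apply open_true | apply smooth_on_scal, HQ |].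
      apply smooth_on_mult; [apply open_true | apply smooth_on_id | apply smooth_on_Derive, HQ].
    + intros t. apply is_derive_unique.
      replace (t ^ m * (INR (S m) * Q t + t * Derive Q t))
        with (INR (S m) * t ^ m * Q t + t ^ S m * Derive Q t) by (simpl; ring).
      apply (is_derive_mult (fun z => z ^ S m) Q);
        [auto_derive; auto; simpl; ring | | intros; apply Rmult_comm].
      apply Derive_correct, (smooth_on_ex_derive _ Q t HQ I).
Qed.

Lemma Ecoef_eq_0 n m : (n < m)%nat -> Ecoef n m = 0.
Proof.
  intros Hnm. unfold Ecoef.
  rewrite (Derive_n_ext _ (fun z => z ^ m * Ein_quotient z ^ m))
    by (intros t; rewrite Ein_eq_mult_quotient; apply Rpow_mult_distr).
  rewrite Derive_n_pow_mult_at_0; [unfold Rdiv; ring | | exact Hnm].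
  apply smooth_on_pow; [apply open_true | apply smooth_Ein_quotient].
Qed.

(** * Derivatives of K~ *)

Lemma falling_S x n : falling x (S n) = x * falling (x - 1) n.
Proof.
  induction n as [|n IH]; [simpl; ring|].
  change (falling x (S (S n))) with (falling x (S n) * (x - INR (S n))).
  rewrite IH. simpl falling. rewrite S_INR. ring.
Qed.

Definition Kcoef (l k m r : nat) : R :=
  (-1) ^ r * Gamma (INR k + 1) / (INR (fact m) * INR (fact (l - m - r))).

Lemma Kcoef_pred l k m r : (1 <= k)%nat -> Kcoef l k m r = INR k * Kcoef l (k - 1) m r.
Proof.
  intros Hk. unfold Kcoef.
  replace (INR k + 1) with (INR (k - 1) + 1 + 1) by (rewrite minus_INR by lia; simpl; ring).
  rewrite Gamma_succ by (pose proof (pos_INR (k - 1)); lra).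
  replace (INR (k - 1) + 1) with (INR k) by (rewrite minus_INR by lia; simpl; ring).
  unfold Rdiv. ring.
Qed.

Lemma Kcoef_split l k m r :
  Kcoef l k m r = (-1) ^ r / INR (fact (l - m - r)) * (Gamma (INR k + 1) / INR (fact m)).
Proof.
  unfold Kcoef. pose proof (INR_fact_neq_0 m). pose proof (INR_fact_neq_0 (l - m - r)).
  field. split; assumption.
Qed.

Lemma sumR_shift_alternating N L (c : nat -> R) :
  sumR 0 N (fun r => (-1) ^ r / INR (fact (N - r)) * match r with O => 0 | S r' => c r' end * L ^ (N - r))
  = - sumR 0 N (fun r => (-1) ^ r / INR (fact (N - r)) * c r * (INR (N - r) * L ^ pred (N - r))).
Proof.
  destruct N as [|N]; [unfold sumR; simpl; ring|].
  rewrite sumR_first, sumR_shift, (sumR_last 0 N) by lia.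
  rewrite Nat.sub_diag. cbn [INR].
  rewrite !Rmult_0_l, !Rmult_0_r, !Rmult_0_l, Rplus_0_l, Rplus_0_r, <- sumR_opp.
  apply sumR_ext. intros r Hr.
  replace (S N - r)%nat with (S (N - r)) by lia.
  rewrite (INR_fact_S (N - r)).
  pose proof (INR_fact_neq_0 (N - r)). assert (INR (S (N - r)) <> 0) by (apply not_0_INR; lia).
  replace (S N - S r)%nat with (N - r)%nat by lia.
  simpl pred. simpl pow. field. split; assumption.
Qed.

(* Expanding [C_{r,a}] by [Ccoef_succ] turns the shift in [r] into a derivative in [L]. *)
Lemma sumR_Ccoef_pred N a L :
  sumR 0 N (fun r => (-1) ^ r / INR (fact (N - r)) * Ccoef r a * L ^ (N - r))
  = sumR 0 N (fun r => (-1) ^ r / INR (fact (N - r)) * Ccoef r (S a)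
                       * (INR (S a) * L ^ (N - r) + INR (N - r) * L ^ pred (N - r))).
Proof.
  set (c := fun r => Ccoef r (S a)).
  rewrite (sumR_ext _ _ _ (fun r => INR (S a) * ((-1) ^ r / INR (fact (N - r)) * c r * L ^ (N - r))
      + - ((-1) ^ r / INR (fact (N - r)) * match r with O => 0 | S r' => c r' end * L ^ (N - r))))
    by (intros r _; rewrite Ccoef_succ; unfold c; destruct r; ring).
  rewrite sumR_plus, sumR_scal, sumR_opp, sumR_shift_alternating, Ropp_involutive, <- sumR_scal, <- sumR_plus.
  apply sumR_ext. intros r _. unfold c. ring.
Qed.

Definition Ktilde_term (l k m n : nat) (v : R) : R :=
  sumR 0 (l - m) (fun r =>
    Kcoef l k m r * Ecoef n m * Ccoef r (k - n) * v ^ (k - n) * ln v ^ (l - m - r)).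

Definition Kresidue_term (l k m : nat) (v : R) : R :=
  sumR 0 (l - m) (fun r =>
    Kcoef l k m r * Ecoef k m * Ccoef r 0 * Derive (fun w => ln w ^ (l - m - r)) v).

Definition Kresidue (l k : nat) (v : R) : R := sumR 0 l (fun m => Kresidue_term l k m v).

Lemma is_derive_pow_ln_monomial K a b v : 0 < v ->
  is_derive (fun w => K * w ^ S a * ln w ^ b) v
    (K * (INR (S a) * v ^ a * ln v ^ b + INR b * v ^ a * ln v ^ pred b)).
Proof. intros Hv. auto_derive; [exact Hv | simpl; field; lra]. Qed.

Lemma is_derive_Ktilde_term l k m n v : (n < k)%nat -> 0 < v ->
  is_derive (Ktilde_term l k m n) v (INR k * Ktilde_term l (k - 1) m n v).
Proof.
  intros Hnk Hv. unfold Ktilde_term.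
  destruct (k - n)%nat as [|a] eqn:Ea; [lia|]. replace (k - 1 - n)%nat with a by lia.
  set (N := (l - m)%nat).
  set (W := Gamma (INR k + 1) / INR (fact m) * Ecoef n m * v ^ a).
  set (dT := fun r (w : R) => Kcoef l k m r * Ecoef n m * Ccoef r (S a)
    * (INR (S a) * w ^ a * ln w ^ (N - r) + INR (N - r) * w ^ a * ln w ^ pred (N - r))).
  assert (Hsum : sumR 0 N (fun r => dT r v)
    = INR k * sumR 0 N (fun r => Kcoef l (k - 1) m r * Ecoef n m * Ccoef r a * v ^ a * ln v ^ (N - r))).
  { rewrite <- sumR_scal.
    transitivity (W * sumR 0 N (fun r => (-1) ^ r / INR (fact (N - r)) * Ccoef r a * ln v ^ (N - r))).
    - rewrite sumR_Ccoef_pred, <- sumR_scal. apply sumR_ext. intros r _.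
      unfold dT. rewrite Kcoef_split. unfold W, N. ring.
    - rewrite <- sumR_scal. apply sumR_ext. intros r _.
      transitivity (INR k * Kcoef l (k - 1) m r * Ecoef n m * Ccoef r a * v ^ a * ln v ^ (N - r)); [|ring].
      rewrite <- Kcoef_pred, Kcoef_split by lia. unfold W, N. ring. }
  rewrite <- Hsum. apply (is_derive_sumR _ dT). intros r _. apply is_derive_pow_ln_monomial, Hv.
Qed.

Lemma smooth_on_ln : smooth_on (Rlt 0) ln.
Proof.
  intros [|n]; [apply ex_derive_upto_0|].
  apply ex_derive_upto_S. split.
  - intros x Hx. exists (/ x). apply is_derive_Reals, derivable_pt_lim_ln, Hx.
  - apply (ex_derive_upto_ext _ (open_gt 0) n (fun v => / v)).
    + intros x Hx. symmetry. apply is_derive_unique, is_derive_Reals, derivable_pt_lim_ln, Hx.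
    + apply smooth_on_inv; [apply open_gt | apply smooth_on_id | intros x Hx; apply Rgt_not_eq, Hx].
Qed.

Lemma smooth_on_ln_pow b : smooth_on (Rlt 0) (fun v => ln v ^ b).
Proof. apply smooth_on_pow; [apply open_gt | apply smooth_on_ln]. Qed.

Lemma smooth_on_Ktilde l k : smooth_on (Rlt 0) (fun v => Ktilde l v k).
Proof.
  apply smooth_on_sumR; [apply open_gt|]. intros m.
  apply smooth_on_sumR; [apply open_gt|]. intros n.
  apply smooth_on_sumR; [apply open_gt|]. intros r.
  apply smooth_on_mult; [apply open_gt | | apply smooth_on_ln_pow].
  apply smooth_on_scal, smooth_on_pow; [apply open_gt | apply smooth_on_id].
Qed.

Lemma smooth_on_Kresidue_summand l k m r :
  smooth_on (Rlt 0) (fun v => Kcoef l k m r * Ecoef k m * Ccoef r 0 * Derive (fun w => ln w ^ (l - m - r)) v).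
Proof. apply smooth_on_scal, smooth_on_Derive, smooth_on_ln_pow. Qed.

Lemma smooth_on_Kresidue l k : smooth_on (Rlt 0) (Kresidue l k).
Proof.
  apply smooth_on_sumR; [apply open_gt|]. intros m.
  apply smooth_on_sumR; [apply open_gt | apply smooth_on_Kresidue_summand].
Qed.

Lemma is_derive_Ktilde_term_top l k m v : 0 < v ->
  is_derive (Ktilde_term l k m k) v (Kresidue_term l k m v).
Proof.
  intros Hv. unfold Ktilde_term, Kresidue_term. rewrite Nat.sub_diag.
  apply (is_derive_sumR (fun r w => Kcoef l k m r * Ecoef k m * Ccoef r 0 * w ^ 0 * ln w ^ (l - m - r))
    (fun r w => Kcoef l k m r * Ecoef k m * Ccoef r 0 * Derive (fun w => ln w ^ (l - m - r)) w)).
  intros r _.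
  apply (is_derive_ext (fun w => Kcoef l k m r * Ecoef k m * Ccoef r 0 * ln w ^ (l - m - r)));
    [intros w; simpl; ring|].
  apply (is_derive_scal (fun w => ln w ^ (l - m - r))), Derive_correct.
  apply (smooth_on_ex_derive _ _ _ (smooth_on_ln_pow _) Hv).
Qed.

Lemma Kresidue_term_eq_0 l k m v : (k < m)%nat -> Kresidue_term l k m v = 0.
Proof.
  intros Hkm. apply sumR_zero. intros r _. rewrite Ecoef_eq_0 by exact Hkm. ring.
Qed.

Lemma is_derive_Ktilde l k v : (1 <= k)%nat -> 0 < v ->
  is_derive (fun w => Ktilde l w k) v (INR k * Ktilde l v (k - 1) + Kresidue l k v).
Proof.
  intros Hk Hv.
  set (dT := fun m n (w : R) =>
    if Compare_dec.lt_dec n k then INR k * Ktilde_term l (k - 1) m n w else Kresidue_term l k m w).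
  replace (INR k * Ktilde l v (k - 1) + Kresidue l k v)
    with (sumR 0 l (fun m => sumR m k (fun n => dT m n v))).
  - apply (is_derive_sumR (fun m w => sumR m k (fun n => Ktilde_term l k m n w))
      (fun m w => sumR m k (fun n => dT m n w))). intros m _.
    apply (is_derive_sumR (fun n w => Ktilde_term l k m n w) (fun n w => dT m n w)). intros n Hn.
    unfold dT. destruct (Compare_dec.lt_dec n k) as [Hnk|Hnk].
    + apply is_derive_Ktilde_term; assumption.
    + replace n with k by lia. apply is_derive_Ktilde_term_top, Hv.
  - unfold Ktilde at 1, Kresidue. fold (Ktilde_term l (k - 1)).
    rewrite <- sumR_scal, <- sumR_plus. apply sumR_ext. intros m _.
    destruct (Compare_dec.le_lt_dec m k) as [Hmk|Hmk].
    + destruct k as [|k]; [lia|]. rewrite sumR_last by lia. rewrite Nat.sub_succ, Nat.sub_0_r, <- sumR_scal.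
      unfold dT at 2. destruct (Compare_dec.lt_dec (S k) (S k)) as [H|_]; [lia|]. f_equal.
      apply sumR_ext. intros n Hn. unfold dT. destruct (Compare_dec.lt_dec n (S k)); [|lia].
      rewrite Nat.sub_succ, Nat.sub_0_r. reflexivity.
    + rewrite !sumR_nil, Kresidue_term_eq_0 by lia. ring.
Qed.

Definition Kresidue_sum (l k nu : nat) (u : R) : R :=
  sumR 0 (nu - 1) (fun j => sumR 0 l (fun m => sumR 0 (l - m) (fun r =>
    Kcoef l k m r * Ecoef (k - j) m * Ccoef r 0 * Derive_n (fun v => ln v ^ (l - m - r)) (nu - j) u))).

Lemma Derive_n_Kresidue l k n u : 0 < u ->
  Derive_n (Kresidue l k) n u = sumR 0 l (fun m => sumR 0 (l - m) (fun r =>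
    Kcoef l k m r * Ecoef k m * Ccoef r 0 * Derive_n (fun v => ln v ^ (l - m - r)) (S n) u)).
Proof.
  intros Hu. unfold Kresidue.
  rewrite (Derive_n_sumR _ (open_gt 0) (fun m v => Kresidue_term l k m v)); [| |exact Hu].
  - apply sumR_ext. intros m _. unfold Kresidue_term.
    rewrite (Derive_n_sumR _ (open_gt 0)); [| apply smooth_on_Kresidue_summand | exact Hu].
    apply sumR_ext. intros r _. rewrite Derive_n_scal_l, Derive_n_S_Derive. reflexivity.
  - intros m. apply smooth_on_sumR; [apply open_gt | apply smooth_on_Kresidue_summand].
Qed.

Lemma Kresidue_sum_1 l k u : Kresidue_sum l k 1 u = Kresidue l k u.
Proof.
  unfold Kresidue_sum, Kresidue, Kresidue_term. simpl Nat.sub. rewrite sumR_single.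
  apply sumR_ext. intros m _. apply sumR_ext. intros r _. rewrite Nat.sub_0_r. reflexivity.
Qed.

Lemma Kresidue_sum_succ l k n u : (1 <= k)%nat -> 0 < u ->
  Kresidue_sum l k (S (S n)) u = Derive_n (Kresidue l k) (S n) u + INR k * Kresidue_sum l (k - 1) (S n) u.
Proof.
  intros Hk Hu. unfold Kresidue_sum. rewrite Derive_n_Kresidue by exact Hu.
  replace (S (S n) - 1)%nat with (S n) by lia. replace (S n - 1)%nat with n by lia.
  rewrite sumR_first, sumR_shift by lia. f_equal.
  - rewrite !Nat.sub_0_r. reflexivity.
  - rewrite <- sumR_scal. apply sumR_ext. intros j _. rewrite <- sumR_scal. apply sumR_ext. intros m _.
    rewrite <- sumR_scal. apply sumR_ext. intros r _. rewrite (Kcoef_pred l k m r) by exact Hk.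
    replace (k - 1 - j)%nat with (k - S j)%nat by lia. replace (S (S n) - S j)%nat with (S n - j)%nat by lia.
    ring.
Qed.

Lemma Derive_n_Ktilde l nu : forall k, (1 <= nu <= k)%nat -> forall u, 0 < u ->
  Derive_n (fun v => Ktilde l v k) nu u = falling (INR k) nu * Ktilde l u (k - nu) + Kresidue_sum l k nu u.
Proof.
  induction nu as [|[|nu] IH]; intros k Hnu u Hu; [lia| |].
  - rewrite Kresidue_sum_1. simpl falling. rewrite Rmult_1_l, Rminus_0_r.
    apply is_derive_unique, is_derive_Ktilde; [lia | exact Hu].
  - rewrite Derive_n_S_Derive.
    rewrite (Derive_n_ext_loc _ (fun v => INR k * Ktilde l v (k - 1) + Kresidue l k v)).
    2:{ destruct (open_gt 0 u Hu) as [e He]. exists e. intros y Hy.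
        apply is_derive_unique, is_derive_Ktilde; [lia | apply He, Hy]. }
    rewrite (Derive_n_plus (fun v => INR k * Ktilde l v (k - 1)) (Kresidue l k)).
    2:{ apply (ex_derive_upto_locally _ (open_gt 0)); [apply smooth_on_scal, smooth_on_Ktilde | exact Hu]. }
    2:{ apply (ex_derive_upto_locally _ (open_gt 0)); [apply smooth_on_Kresidue | exact Hu]. }
    rewrite Derive_n_scal_l, IH, (falling_S (INR k)), Kresidue_sum_succ by (exact Hu || lia).
    rewrite minus_INR by lia. replace (k - 1 - S nu)%nat with (k - S (S nu))%nat by lia. simpl INR. ring.
Qed.

Theorem lemma4 (l kappa : nat) (hl : (1 <= l)%nat) (hk : (1 <= kappa)%nat)
  (nu : nat) (hnu1 : (1 <= nu)%nat) (hnu2 : (nu <= kappa)%nat)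
  (u : R) (hu : 1 < u) :
  Derive_n (fun v => Ktilde l v kappa) nu u =
  falling (INR kappa) nu * Ktilde l u (kappa - nu)
  + sumR 0 (nu - 1) (fun j =>
    sumR 0 l (fun m =>
    sumR 0 (l - m) (fun r =>
      (-1) ^ r * Gamma (INR kappa + 1) / (INR (fact m) * INR (fact (l - m - r)))
      * Ecoef (kappa - j) m * Ccoef r 0
      * Derive_n (fun v => ln v ^ (l - m - r)) (nu - j) u))).
Proof.
  exact (Derive_n_Ktilde l nu kappa (conj hnu1 hnu2) u ltac:(lra)).
Qed.
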